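(* Let $p$ be odd, $R$ a Noetherian Banach–Tate $\mathbb{Z}_p$-algebra with multiplicative pseudo-uniformizer $\varpi$, and assume there is no $x\in R$ with $1<|x|<|\varpi|^{-1}$. Let $r\in[1/p,1)$, $t\ge1$, and let $f:\bigoplus_{i=1}^t\mathcal{D}^r\to\bigoplus_{i=1}^t\mathcal{D}^{r^{1/p}}$ be a norm-decreasing $R$-linear map, $\iota:\bigoplus_{i=1}^t\mathcal{D}^{r^{1/p}}\hookrightarrow\bigoplus_{i=1}^t\mathcal{D}^r$ the natural inclusion, and $U=\iota\circ f$ (a compact endomorphism of $M=\bigoplus_{i=1}^t\mathcal{D}^r$). Then $U(e^i_{r,\alpha})=\sum_{j,\beta}a^j_\beta e^j_{r,\beta}$ with $|a^j_\beta|\le|\varpi|^{n(r,\varpi,\beta)-n(r^{1/p},\varpi,\beta)}$ for all $j,\beta$. Moreover, defining $\lambda(0)=0$ and $\lambda(i+1)=\lambda(i)+n(r,\varpi,\lfloor i/t\rfloor)-n(r^{1/p},\varpi,\lfloor i/t\rfloor)$, the Fredholm determinant $\det(1-TU\mid M)=\sum_{n\ge0}c_nT^n\in R\{\{T\}\}$ satisfies $|c_n|\le|\varpi|^{\lambda(n)}$ for all $n$.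
   Context: A Banach–Tate $\mathbb{Z}_p$-algebra is a complete non-archimedean normed ring $R$ with a unit $\varpi$, $|\varpi|<1$, $|\varpi s|=|\varpi||s|$ for all $s$, and a ring map $\mathbb{Z}_p\to R$ with $|x|\le|x|_p$. For $s\in[1/p,1)$, $\mathcal{D}^s=\mathcal{D}^s(\mathbb{Z}_p,R)=\{\sum_{\alpha\ge0}d_\alpha\mathbf{n}^\alpha: d_\alpha\in R,\ |d_\alpha|s^\alpha\to0\}$ with norm $\sup_\alpha|d_\alpha|s^\alpha$, where $\mathbf{n}=\delta_1-1$ in the distribution algebra of $\mathbb{Z}_p$ (completion of the continuous $R$-valued distributions on $\mathbb{Z}_p$); $\mathcal{D}^{r^{1/p}}\subseteq\mathcal{D}^r$ naturally. Put $n(s,\varpi,\alpha)=\lfloor\alpha\log s/\log|\varpi|\rfloor$ and $e_{s,\alpha}=\varpi^{-n(s,\varpi,\alpha)}\mathbf{n}^\alpha$, a potential orthonormal basis of $\mathcal{D}^s$; $e^i_{s,\alpha}\in\bigoplus_{i=1}^t\mathcal{D}^s$ is $e_{s,\alpha}$ in the $i$-th summand. The basis of $M$ is ordered $e^1_{r,0},\dots,e^t_{r,0},e^1_{r,1},\dots$ (so the row indexed $i\ge0$ corresponds to $\alpha=\lfloor i/t\rfloor$). The Fredholm determinant of a compact operator on a potentially orthonormalizable Banach module is $\sum c_nT^n$ where $c_n=(-1)^n\sum$ of all principal $n\times n$ minors of the matrix of the operator in a potential orthonormal basis. *)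

From HB Require Import structures.
From mathcomp Require Import all_boot all_order all_algebra.
From Stdlib Require Import Reals.
Set Implicit Arguments. Unset Strict Implicit. Unset Printing Implicit Defensive.
Import GRing.Theory.
Local Open Scope ring_scope.

Definition real := Rdefinitions.R.

Definition padic_abs (p : nat) (z : int) : real :=
  if z == 0 then R0 else Rinv (pow (INR p) (logn p (absz z))).

Section Defs.
Variable A : comUnitRingType.
Variable nrm : A -> real.

Definition seq_cv (u : nat -> A) (l : A) : Prop :=
  forall eps, Rlt R0 eps -> exists N, forall n, leq N n -> Rlt (nrm (u n - l)) eps.
Definition cauchy (u : nat -> A) : Prop :=
  forall eps, Rlt R0 eps -> exists N, forall m n, leq N m -> leq N n ->
    Rlt (nrm (u m - u n)) eps.

Definition is_ideal (I : A -> Prop) : Prop :=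
  [/\ I 0, (forall x y, I x -> I y -> I (x + y)) & (forall a x, I x -> I (a * x))].
Definition noetherian : Prop :=
  forall I, is_ideal I -> exists s : seq A, (forall x, x \in s -> I x) /\
    (forall x, I x -> exists c : seq A, x = \sum_(i < size s) c`_i * s`_i).

(* Banach-Tate Z_p-algebra with multiplicative pseudo-uniformizer w.
   The structure map Z_p -> R is recorded through its restriction to Z. *)
Record banach_tate (p : nat) (w : A) : Prop := {
  bt_nonneg : forall x, Rle R0 (nrm x);
  bt_zero : forall x, nrm x = R0 <-> x = 0;
  bt_opp : forall x, nrm (- x) = nrm x;
  bt_ultra : forall x y, Rle (nrm (x + y)) (Rmax (nrm x) (nrm y));
  bt_submul : forall x y, Rle (nrm (x * y)) (Rmult (nrm x) (nrm y));
  bt_one : Rle (nrm 1) R1;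
  bt_complete : forall u, cauchy u -> exists l, seq_cv u l;
  bt_unit : w \is a GRing.unit;
  bt_lt1 : Rlt (nrm w) R1;
  bt_mult : forall s, nrm (w * s) = Rmult (nrm w) (nrm s);
  bt_Zp : forall z : int, Rle (nrm (z%:~R)) (padic_abs p z)
}.

(* Elements of (+)_{i<t} D^s, represented by their coefficients d_{i,alpha}
   in the expansion sum_alpha d_alpha n^alpha (n = delta_1 - 1). *)
Definition vec (t : nat) := 'I_t -> nat -> A.

Definition in_D (t : nat) (s : real) (x : vec t) : Prop :=
  forall i, Un_cv (fun a => Rmult (nrm (x i a)) (pow s a)) R0.

Definition norm_le (t : nat) (s : real) (x : vec t) (c : real) : Prop :=
  forall i a, Rle (Rmult (nrm (x i a)) (pow s a)) c.

Definition vadd (t : nat) (x y : vec t) : vec t := fun i a => x i a + y i a.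
Definition vscale (t : nat) (c : A) (x : vec t) : vec t := fun i a => c * x i a.

Definition nfl (s : real) (w : A) (a : nat) : Z :=
  Int_part (Rdiv (Rmult (INR a) (ln s)) (ln (nrm w))).

Definition ebasis (t : nat) (s : real) (w : A) (i : 'I_t) (a : nat) : vec t :=
  fun j b => if (j == i) && (b == a) then w ^- Z.to_nat (nfl s w a) else 0.

Definition ecoord (t : nat) (s : real) (w : A) (y : vec t) (j : 'I_t) (b : nat) : A :=
  y j b * w ^+ Z.to_nat (nfl s w b).

(* matrix of U in the ordered basis e^1_{s,0},...,e^t_{s,0},e^1_{s,1},...:
   entry (k,l) = coefficient of the k-th basis vector in U(l-th basis vector) *)
Definition mat (t : nat) (ht : leq 1 t) (s : real) (w : A) (U : vec t -> vec t)
    (k l : nat) : A :=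
  ecoord s w (U (ebasis s w (Ordinal (ltn_pmod l ht)) (l %/ t)))
        (Ordinal (ltn_pmod k ht)) (k %/ t).

Definition fred_partial (M : nat -> nat -> A) (N n : nat) : A :=
  (-1) ^+ n * \sum_(S : {set 'I_N} | #|S| == n)
     \det (\matrix_(a < #|S|, b < #|S|)
             M (nat_of_ord (enum_val a)) (nat_of_ord (enum_val b))).

End Defs.

Fixpoint lam (A : comUnitRingType) (nrm : A -> real) (t : nat) (r r' : real) (w : A)
    (i : nat) : Z :=
  match i with
  | O => 0%Z
  | S i' => (lam nrm t r r' w i' + nfl nrm r w (i' %/ t) - nfl nrm r' w (i' %/ t))%Z
  end.

(* The basis vectors e_{r,alpha} have norm 1 in D^r, so the coefficients y of
   their images under f satisfy |y| r^{beta/p} <= 1.  Because no element of R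
   has norm strictly between 1 and |w|^-1, this already forces
   |y| <= |w|^{-n(r^{1/p},w,beta)}, which is the entry bound.  The exponents
   e(beta) = n(r,w,beta) - n(r^{1/p},w,beta) are floor(p z) - floor(z) with
   z = beta log r^{1/p} / log |w|, hence nondecreasing and unbounded.  So the
   k-th row of the matrix of U is bounded by |w|^{e(k/t)}: every principal
   n x n minor is bounded by |w|^{lambda(n)}, and passing from the N x N to
   the (N+1) x (N+1) block only adds minors through the last row, of norm at
   most |w|^{e(N/t)}.  The partial Fredholm coefficients are therefore Cauchy,
   and converge in the complete ring R with the same bound. *)

From HB Require Import structures.
From mathcomp Require Import all_boot all_order all_algebra.
From Stdlib Require Import Reals Lra Lia.
Set Implicit Arguments. Unset Strict Implicit. Unset Printing Implicit Defensive.
Import GRing.Theory.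
Local Open Scope ring_scope.

Definition set_vals N (S : {set 'I_N}) : seq nat := map val (enum S).

Lemma size_set_vals N (S : {set 'I_N}) : size (set_vals S) = #|S|.
Proof. by rewrite size_map -cardE. Qed.

Lemma set_valsE N (S : {set 'I_N}) :
  set_vals S = filter (fun k => [exists x in S, val x == k]) (iota 0 N).
Proof.
rewrite /set_vals; have -> : enum S = filter (mem S) (enum 'I_N) by rewrite enumT.
rewrite -val_enum_ord [in RHS]filter_map; congr map; apply: eq_filter => x /=.
apply/idP/existsP => [xS|[y /andP[yS /eqP /val_inj Hy]]]; last by rewrite -Hy.
by exists x; rewrite xS eqxx.
Qed.

Lemma sorted_ltn_nth_ge (s : seq nat) (m a : nat) :
  sorted ltn s -> all (leq m) s -> (a < size s)%nat -> (m + a <= nth 0%nat s a)%nat.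
Proof.
elim: s m a => [//|x s IH] m [|a] /= Hs /andP[Hx Hall] Ha; first by rewrite addn0.
rewrite -addSnnS; apply: IH => //; first exact: path_sorted Hs.
apply: sub_all (order_path_min ltn_trans Hs) => y; exact: leq_ltn_trans Hx.
Qed.

Lemma set_vals_nth_ge N (S : {set 'I_N}) (a : nat) :
  (a < #|S|)%nat -> (a <= nth 0%nat (set_vals S) a)%nat.
Proof.
rewrite -size_set_vals set_valsE => Ha.
apply: (@sorted_ltn_nth_ge _ 0) => //; last exact/allP.
apply: sorted_filter; [exact: ltn_trans | exact: iota_ltn_sorted].
Qed.

Definition minor_on (A : comUnitRingType) (M : nat -> nat -> A) n (s : seq nat) : A :=
  \det (\matrix_(a < n, b < n) M (nth 0%nat s a) (nth 0%nat s b)).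

Definition minor_sum (A : comUnitRingType) (M : nat -> nat -> A) N n : A :=
  \sum_(S : {set 'I_N} | #|S| == n) minor_on M n (set_vals S).

Lemma fred_partialE (A : comUnitRingType) (M : nat -> nat -> A) N n :
  fred_partial M N n = (-1) ^+ n * minor_sum M N n.
Proof.
congr (_ * _); apply: eq_bigr => S /eqP <-; congr (\det _).
apply/matrixP => a b; rewrite !mxE /enum_val.
by rewrite (nth_map (enum_default a)) ?(nth_map (enum_default b)) // -cardE.
Qed.

Section SubsetsOrdS.
Variables (A : comUnitRingType) (F : seq nat -> A) (n N : nat).

Let wid := widen_ord (leqnSn N).

Let wid_inj : injective wid.
Proof. by move=> x y /(congr1 val) /= /val_inj. Qed.

Let wid_neq_max (x : 'I_N) : wid x != ord_max.
Proof. by rewrite -val_eqE /= ltn_eqF. Qed.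

Lemma set_vals_widen (S : {set 'I_N}) : set_vals (wid @: S) = set_vals S.
Proof.
rewrite !set_valsE.
have -> : iota 0 N.+1 = iota 0 N ++ [:: N] by rewrite -addn1 iotaD.
rewrite filter_cat /=.
have -> : [exists x in wid @: S, val x == N] = false.
  apply/negbTE/existsP => -[_ /andP[/imsetP[x _ ->] /=]].
  by rewrite ltn_eqF.
rewrite cats0; apply: eq_filter => k.
apply/existsP/existsP => [[_ /andP[/imsetP[x xS ->] Hx]]|[x /andP[xS Hx]]].
  by exists x; rewrite xS.
by exists (wid x); rewrite (mem_imset _ _ wid_inj) xS.
Qed.

(* Subsets of [0, N] not containing N are exactly the subsets of [0, N). *)
Lemma sum_subsets_ordS :
  \sum_(S : {set 'I_N.+1} | #|S| == n) F (set_vals S) =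
  \sum_(S : {set 'I_N} | #|S| == n) F (set_vals S) +
  \sum_(S : {set 'I_N.+1} | (#|S| == n) && (ord_max \in S)) F (set_vals S).
Proof.
rewrite (bigID (fun S : {set 'I_N.+1} => ord_max \in S)) /= addrC; congr (_ + _).
rewrite (reindex_onto (fun S : {set 'I_N} => wid @: S)
  (fun S : {set 'I_N.+1} => [set x | wid x \in S])).
  apply: eq_big => [S|S _]; last by rewrite set_vals_widen.
  rewrite (card_imset _ wid_inj).
  have -> : ord_max \notin wid @: S.
    by apply/imsetP => -[x _ /eqP]; rewrite eq_sym (negbTE (wid_neq_max x)).
  have -> : [set x | wid x \in wid @: S] == S.
    by apply/eqP/setP => x; rewrite inE (mem_imset _ _ wid_inj).
  by rewrite !andbT.
move=> S /andP[_ HS]; apply/setP => y.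
case: (unliftP ord_max y) => [z ->|->].
  have -> : lift ord_max z = wid z by apply: val_inj; rewrite /= /bump leqNgt ltn_ord.
  by rewrite (mem_imset _ _ wid_inj) inE.
rewrite (negbTE HS); apply/negbTE/imsetP => -[x _ /eqP].
by rewrite eq_sym (negbTE (wid_neq_max x)).
Qed.

End SubsetsOrdS.

Lemma pow_le1 (q : R) k : Rle 0 q -> Rle q 1 -> Rle (q ^ k) 1.
Proof. by move=> q0 q1; rewrite -(pow1 k); apply: pow_incr; lra. Qed.

Lemma pow_le_pow_of_le1 (q : R) m k :
  Rle 0 q -> Rle q 1 -> (m <= k)%nat -> Rle (q ^ k) (q ^ m).
Proof.
move=> q0 q1 mk; rewrite -(subnKC mk) pow_add -[X in Rle _ X]Rmult_1_r.
by apply: Rmult_le_compat_l; [exact: pow_le | exact: pow_le1].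
Qed.

Section UltrametricNorm.
Variables (A : comUnitRingType) (nrm : A -> R).
Hypothesis nrm_ge0 : forall x, Rle 0 (nrm x).
Hypothesis nrm0 : nrm 0 = 0%R.
Hypothesis nrmN : forall x, nrm (- x) = nrm x.
Hypothesis nrm_ultra : forall x y, Rle (nrm (x + y)) (Rmax (nrm x) (nrm y)).
Hypothesis nrm_submul : forall x y, Rle (nrm (x * y)) (nrm x * nrm y).
Hypothesis nrm1_le : Rle (nrm 1) 1.

Lemma nrm_sum_le (I : Type) (r : seq I) (P : pred I) (F : I -> A) (B : R) :
  Rle 0 B -> (forall i, P i -> Rle (nrm (F i)) B) ->
  Rle (nrm (\sum_(i <- r | P i) F i)) B.
Proof.
move=> B0 FB; apply: (big_ind (fun x => Rle (nrm x) B)); rewrite ?nrm0 //.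
by move=> x y Hx Hy; apply: Rle_trans (nrm_ultra x y) _; apply: Rmax_lub.
Qed.

Lemma nrmB_le x y B : Rle (nrm x) B -> Rle (nrm y) B -> Rle (nrm (x - y)) B.
Proof.
move=> Hx Hy; apply: Rle_trans (nrm_ultra _ _) _.
by apply: Rmax_lub; rewrite ?nrmN.
Qed.

Lemma nrm_signr_mul_le (n : nat) x : Rle (nrm ((-1) ^+ n * x)) (nrm x).
Proof.
apply: Rle_trans (nrm_submul _ _) _; rewrite -signr_odd.
rewrite -[X in Rle _ X]Rmult_1_l; apply: Rmult_le_compat_r => //.
by case: (odd n); rewrite ?expr1 ?expr0 ?nrmN.
Qed.

Variable q : R.
Hypothesis q_ge0 : Rle 0 q.

Lemma nrm_prod_le_pow (I : Type) (r : seq I) (P : pred I) (F : I -> A) (g : I -> nat) :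
  (forall i, P i -> Rle (nrm (F i)) (q ^ g i)) ->
  Rle (nrm (\prod_(i <- r | P i) F i)) (q ^ (\sum_(i <- r | P i) g i)%nat).
Proof.
move=> Fg; apply: (big_ind2 (fun x m => Rle (nrm x) (q ^ m))) => //.
move=> x1 x2 m1 m2 H1 H2; rewrite pow_add.
by apply: Rle_trans (nrm_submul _ _) _; apply: Rmult_le_compat.
Qed.

Lemma nrm_det_le_pow k (B : 'M[A]_k) (g : 'I_k -> nat) :
  (forall i j, Rle (nrm (B i j)) (q ^ g i)) ->
  Rle (nrm (\det B)) (q ^ (\sum_i g i)%nat).
Proof.
move=> Bg; apply: nrm_sum_le => [|s _]; first exact: pow_le.
apply: Rle_trans (nrm_signr_mul_le _ _) _.
by apply: nrm_prod_le_pow => i _.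
Qed.

Hypothesis nrm_complete : forall u, cauchy nrm u -> exists l, seq_cv nrm u l.
Hypothesis q_lt1 : Rlt q 1.

Variables (M : nat -> nat -> A) (e : nat -> nat).
Hypothesis e_mono : forall k k', (k <= k')%nat -> (e k <= e k')%nat.
Hypothesis e_unbounded : forall K, exists N, (K <= e N)%nat.
Hypothesis M_row_bound : forall k l, Rle (nrm (M k l)) (q ^ e k).

Variable n : nat.

Let q_le1 : Rle q 1. Proof. lra. Qed.

Lemma nrm_minor_on_le s (g : 'I_n -> nat) :
  (forall a : 'I_n, (g a <= e (nth 0%nat s a))%nat) ->
  Rle (nrm (minor_on M n s)) (q ^ (\sum_a g a)%nat).
Proof.
move=> ge; apply: nrm_det_le_pow => a b; rewrite mxE.
exact: Rle_trans (M_row_bound _ _) (pow_le_pow_of_le1 _ _ (ge a)).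
Qed.

(* The k-th element of a subset of indices is at least k, and e is monotone. *)
Lemma nrm_minor_sum_le N : Rle (nrm (minor_sum M N n)) (q ^ (\sum_(k < n) e k)%nat).
Proof.
apply: nrm_sum_le => [|S /eqP HS]; first exact: pow_le.
apply: nrm_minor_on_le => a; apply: e_mono.
by apply: set_vals_nth_ge; rewrite HS.
Qed.

(* A minor through row N has one row bounded by q^(e N), the others by 1. *)
Lemma nrm_minor_sum_step N : Rle (nrm (minor_sum M N.+1 n - minor_sum M N n)) (q ^ e N).
Proof.
rewrite /minor_sum sum_subsets_ordS addrC addKr.
apply: nrm_sum_le => [|S /andP[/eqP HS HN]]; first exact: pow_le.
set s := set_vals S.
have Ns : N \in s by apply/mapP; exists ord_max; rewrite ?mem_enum.
have Hi : (index N s < n)%nat by rewrite -HS -size_set_vals index_mem.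
apply: Rle_trans (nrm_minor_on_le (g := fun a => if nth 0%nat s a == N then e N else 0%nat) _) _.
  by move=> a; case: eqP => [->|].
apply: pow_le_pow_of_le1 => //; rewrite (bigD1 (Ordinal Hi)) //= nth_index // eqxx.
exact: leq_addr.
Qed.

Let u N := fred_partial M N n.

Lemma fred_partial_shift N k : Rle (nrm (u (N + k) - u N)) (q ^ e N).
Proof.
elim: k => [|k IH]; first by rewrite addn0 subrr nrm0; exact: pow_le.
have -> : u (N + k.+1) - u N = (u (N + k).+1 - u (N + k)) + (u (N + k) - u N).
  by rewrite addnS addrA subrK.
apply: Rle_trans (nrm_ultra _ _) _; apply: Rmax_lub => //.
rewrite /u !fred_partialE -mulrBr; apply: Rle_trans (nrm_signr_mul_le _ _) _.
apply: Rle_trans (nrm_minor_sum_step _) _.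
by apply: pow_le_pow_of_le1 => //; apply: e_mono; exact: leq_addr.
Qed.

Lemma fred_partial_cauchy : cauchy nrm u.
Proof.
move=> eps eps_gt0.
have [K HK] : exists K : nat, forall m, (m >= K)%coq_nat -> Rlt (Rabs (q ^ m)) eps.
  by apply: pow_lt_1_zero => //; rewrite Rabs_right; lra.
have [N0 HN0] := e_unbounded K.
have qe_lt : Rlt (q ^ e N0) eps.
  by have := HK _ (leP HN0); rewrite Rabs_right //; apply: Rle_ge; exact: pow_le.
exists N0 => m m' Hm Hm'.
have -> : u m - u m' = (u m - u N0) - (u m' - u N0) by rewrite opprB addrA subrK.
apply: Rle_lt_trans qe_lt; apply: nrmB_le.
  by rewrite -(subnKC Hm); exact: fred_partial_shift.
by rewrite -(subnKC Hm'); exact: fred_partial_shift.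
Qed.

Lemma fred_coef_limit :
  exists c, seq_cv nrm u c /\ Rle (nrm c) (q ^ (\sum_(k < n) e k)%nat).
Proof.
have [c uc] := nrm_complete fred_partial_cauchy.
exists c; split => //; apply: Rnot_lt_le => Hlt.
have [N HN] := uc (nrm c - q ^ (\sum_(k < n) e k)%nat)%R ltac:(lra).
have uN_le : Rle (nrm (u N)) (q ^ (\sum_(k < n) e k)%nat).
  by rewrite /u fred_partialE; apply: Rle_trans (nrm_signr_mul_le _ _) _;
    exact: nrm_minor_sum_le.
have := HN N (leqnn N); rewrite -nrmN opprB => Hc.
have := pow_le q (\sum_(k < n) e k)%nat q_ge0.
have := nrm_ultra (u N) (c - u N); rewrite addrC subrK => Hle qS_ge0.
have h1 : Rlt (nrm (u N)) (nrm c) by exact: Rle_lt_trans uN_le Hlt.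
have h2 : Rlt (nrm (c - u N)) (nrm c) by apply: Rlt_le_trans Hc _; lra.
exact: Rlt_not_le _ _ (Rmax_lub_lt _ _ _ h1 h2) Hle.
Qed.

End UltrametricNorm.

Lemma Int_part_bounds (x : R) : Rle (IZR (Int_part x)) x /\ Rlt x (IZR (Int_part x) + 1).
Proof. by have [? ?] := base_Int_part x; split; lra. Qed.

Lemma Z_le_of_IZR_lt_add1 (x y : Z) : Rlt (IZR x) (IZR y + 1) -> (x <= y)%Z.
Proof. by rewrite -plus_IZR => /lt_IZR; lia. Qed.

Lemma Int_part_ge0 x : Rle 0 x -> (0 <= Int_part x)%Z.
Proof.
have [_ ?] := Int_part_bounds x => x0.
by apply: (@Z_le_of_IZR_lt_add1 0); lra.
Qed.

Lemma Int_part_mul_sub_mono (P : nat) (z z' : R) :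
  (1 <= P)%coq_nat -> Rle 0 z -> Rle z z' ->
  (Int_part (INR P * z) - Int_part z <= Int_part (INR P * z') - Int_part z')%Z.
Proof.
move=> P1 z0 zz'.
have [Ha1 Ha2] := Int_part_bounds (INR P * z).
have [Hb1 Hb2] := Int_part_bounds z.
have [Ha1' Ha2'] := Int_part_bounds (INR P * z').
have [Hb1' Hb2'] := Int_part_bounds z'.
have b0 := Int_part_ge0 z0.
move: (Int_part (INR P * z)) (Int_part z) (Int_part (INR P * z')) (Int_part z')
  Ha1 Ha2 Hb1 Hb2 Ha1' Ha2' Hb1' Hb2' b0 => a b a' b' *.
have P1' : Rle 1 (INR P) by apply: (le_INR 1).
have bb' : (b <= b')%Z by apply: Z_le_of_IZR_lt_add1; lra.
have aa' : (a <= a')%Z by apply: Z_le_of_IZR_lt_add1; nra.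
have Pb'_le : (Z.of_nat P * b' <= a')%Z.
  by apply: Z_le_of_IZR_lt_add1; rewrite mult_IZR -INR_IZR_INZ; nra.
have a_le : (a <= Z.of_nat P * b + Z.of_nat P - 1 + 0)%Z.
  apply: Z_le_of_IZR_lt_add1.
  by rewrite plus_IZR minus_IZR plus_IZR mult_IZR -INR_IZR_INZ; nra.
nia.
Qed.

Lemma Int_part_le_mul_sub (P : nat) (z : R) :
  (2 <= P)%coq_nat -> Rle 0 z -> (Int_part z <= Int_part (INR P * z) - Int_part z)%Z.
Proof.
move=> P2 z0.
have [Ha1 Ha2] := Int_part_bounds (INR P * z).
have [Hb1 Hb2] := Int_part_bounds z.
have b0 := Int_part_ge0 z0.
move: (Int_part (INR P * z)) (Int_part z) Ha1 Ha2 Hb1 Hb2 b0 => a b *.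
have P2' : Rle 2 (INR P) by apply: (le_INR 2).
have : (Z.of_nat P * b <= a)%Z.
  by apply: Z_le_of_IZR_lt_add1; rewrite mult_IZR -INR_IZR_INZ; nra.
nia.
Qed.

Lemma ln_le_inv (x y : R) : Rlt 0 x -> Rlt 0 y -> Rle (ln x) (ln y) -> Rle x y.
Proof. by move=> x0 y0 xy; apply: Rnot_lt_le => yx; have := ln_increasing _ _ y0 yx; lra. Qed.

Section BanachTate.
Variables (p : nat) (A : comUnitRingType) (nrm : A -> R) (w : A).
Hypothesis BT : banach_tate nrm p w.

Local Notation q := (nrm w).

Lemma bt_nrm0 : nrm 0 = 0%R.
Proof. exact/(bt_zero BT). Qed.

Lemma bt_nrm1 : nrm 1 = 1%R.
Proof.
have : nrm 1 <> 0%R by move/(bt_zero BT)/eqP; rewrite oner_eq0.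
have := bt_one BT; have := bt_submul BT 1 1; have := bt_nonneg BT 1.
rewrite mulr1; nra.
Qed.

Lemma bt_q_gt0 : Rlt 0 q.
Proof.
have : q <> 0%R by move/(bt_zero BT) => w0; have := bt_unit BT; rewrite w0 unitr0.
by have := bt_nonneg BT w; lra.
Qed.

Lemma nrm_wXmul k s : nrm (w ^+ k * s) = (q ^ k * nrm s)%R.
Proof.
elim: k s => [|k IH] s /=; first by rewrite expr0 mul1r; lra.
by rewrite exprS -mulrA (bt_mult BT) IH; lra.
Qed.

Lemma nrm_wV k : nrm (w ^- k) = (/ q ^ k)%R.
Proof.
have wk_unit : w ^+ k \is a GRing.unit by rewrite unitrX // (bt_unit BT).
have := nrm_wXmul k (w ^- k); rewrite mulrV // bt_nrm1 => H.
have qk_gt0 : (q ^ k > 0)%R by apply: pow_lt; exact: bt_q_gt0.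
by apply: (Rmult_eq_reg_l (q ^ k)); [rewrite -H Rinv_r; lra | lra].
Qed.

Lemma ln_q_lt0 : Rlt (ln q) 0.
Proof. by rewrite -ln_1; apply: ln_increasing; [exact: bt_q_gt0 | exact: bt_lt1 BT]. Qed.

Section Radius.
Variable s : R.
Hypotheses (s_gt0 : Rlt 0 s) (s_lt1 : Rlt s 1).

Lemma nfl_ge0 b : (0 <= nfl nrm s w b)%Z.
Proof.
apply: Int_part_ge0; rewrite /Rdiv Rmult_assoc.
have : Rlt (ln s) 0 by rewrite -ln_1; apply: ln_increasing.
have := Rinv_lt_0_compat _ ln_q_lt0 => iq_lt0 ls_lt0.
by apply: Rmult_le_pos; [exact: pos_INR | nra].
Qed.

Let n_s b := Z.to_nat (nfl nrm s w b).

Let ln_pow_n_s b k : ln (q ^ (n_s b + k)) = ((IZR (nfl nrm s w b) + INR k) * ln q)%R.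
Proof.
rewrite ln_pow ?plus_INR; last exact: bt_q_gt0.
by rewrite /n_s INR_IZR_INZ (Znat.Z2Nat.id _ (nfl_ge0 (b:=b))).
Qed.

Let div_ln_qK b : (INR b * ln s / ln q * ln q = INR b * ln s)%R.
Proof. by field; have := ln_q_lt0; lra. Qed.

Lemma pow_le_pow_nfl b : Rle (s ^ b) (q ^ n_s b).
Proof.
have [Hf _] := Int_part_bounds (INR b * ln s / ln q).
apply: ln_le_inv; [exact: pow_lt | apply: pow_lt; exact: bt_q_gt0 |].
rewrite -[n_s b]addn0 ln_pow_n_s ln_pow //.
have := ln_q_lt0; have := div_ln_qK b; rewrite /nfl in Hf *; simpl; nra.
Qed.

Lemma pow_nflS_lt_pow b : Rlt (q ^ (n_s b).+1) (s ^ b).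
Proof.
have [_ Hf] := Int_part_bounds (INR b * ln s / ln q).
apply: ln_lt_inv; [by apply: pow_lt; exact: bt_q_gt0 | exact: pow_lt |].
rewrite -addn1 ln_pow_n_s ln_pow //.
have := ln_q_lt0; have := div_ln_qK b; rewrite /nfl in Hf *; simpl; nra.
Qed.

Lemma ebasis_in_D t (i : 'I_t) a : in_D nrm s (ebasis nrm s w i a).
Proof.
move=> j eps eps_gt0; exists a.+1 => b ab; rewrite /ebasis /R_dist.
have -> : (b == a) = false by apply/eqP => ba; move: ab; rewrite ba; lia.
by rewrite andbF bt_nrm0 Rmult_0_l Rminus_0_r Rabs_R0.
Qed.

Lemma ebasis_norm_le1 t (i : 'I_t) a : norm_le nrm s (ebasis nrm s w i a) 1%R.
Proof.
move=> j b; rewrite /ebasis.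
case: ((j == i) && (b == a)) / andP => [[_ /eqP ->]|_]; last by rewrite bt_nrm0; lra.
have qn_gt0 : (0 < q ^ n_s a)%R by apply: pow_lt; exact: bt_q_gt0.
rewrite nrm_wV; apply: (Rmult_le_reg_l (q ^ n_s a)) => //.
by rewrite -Rmult_assoc Rinv_r; have := pow_le_pow_nfl a; lra.
Qed.

End Radius.

Hypothesis norm_gap : forall x : A, ~ (Rlt 1 (nrm x) /\ Rlt (nrm x) (/ q)).

(* If |y| > |w|^-k then w^k y would have norm strictly between 1 and |w|^-1. *)
Lemma nrm_le_wV_of_gap y k s :
  Rle (nrm y * s) 1 -> Rlt (q ^ k.+1) s -> Rle (nrm y) (/ q ^ k).
Proof.
move=> ys_le1 qk_lt; apply: Rnot_lt_le => y_gt.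
have q_gt0 := bt_q_gt0.
have qk_gt0 : (0 < q ^ k)%R by apply: pow_lt.
apply: (norm_gap (x := w ^+ k * y)); rewrite nrm_wXmul; split.
  by have := Rmult_lt_compat_l _ _ _ qk_gt0 y_gt; rewrite Rinv_r; lra.
have y_gt0 : (0 < nrm y)%R by have := Rinv_0_lt_compat _ qk_gt0; lra.
have qy_lt : (q ^ k.+1 * nrm y < s * nrm y)%R by apply: Rmult_lt_compat_r.
apply: (Rmult_lt_reg_l q) => //; rewrite Rinv_r -?Rmult_assoc; last lra.
change (q ^ k.+1 * nrm y < 1)%R; lra.
Qed.

Variables (r : R) (t : nat).
Hypothesis p_ge2 : (2 <= p)%coq_nat.
Hypotheses (r_ge : Rle (/ INR p) r) (r_lt1 : Rlt r 1).

Let r' := Rpower r (/ INR p).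

Lemma r_gt0 : Rlt 0 r.
Proof.
have : (0 < / INR p)%R by apply: Rinv_0_lt_compat; apply: lt_0_INR; lia.
lra.
Qed.

Lemma ln_r'E : ln r' = (/ INR p * ln r)%R.
Proof. by rewrite /r' /Rpower ln_exp. Qed.

Lemma r'_gt0 : Rlt 0 r'.
Proof. exact: exp_pos. Qed.

Lemma r'_lt1 : Rlt r' 1.
Proof.
apply: ln_lt_inv; [exact: r'_gt0 | lra |]; rewrite ln_1 ln_r'E.
have : Rlt (ln r) 0 by rewrite -ln_1; apply: ln_increasing; [exact: r_gt0 | ].
have : (0 < / INR p)%R by apply: Rinv_0_lt_compat; apply: lt_0_INR; lia.
nra.
Qed.

Variable f : vec A t -> vec A t.
Hypothesis f_norm :
  forall x c, in_D nrm r x -> norm_le nrm r x c -> norm_le nrm r' (f x) c.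

Lemma ecoord_f_ebasis_le i a j b :
  Rle (nrm (ecoord nrm r w (f (ebasis nrm r w i a)) j b))
      (powerRZ q (nfl nrm r w b - nfl nrm r' w b)%Z).
Proof.
rewrite /ecoord mulrC nrm_wXmul; set y := f _ j b.
have y_le : Rle (nrm y) (/ q ^ Z.to_nat (nfl nrm r' w b)).
  apply: nrm_le_wV_of_gap (pow_nflS_lt_pow r'_gt0 r'_lt1 b).
  exact: f_norm (ebasis_in_D r i a) (ebasis_norm_le1 r_gt0 r_lt1 i a) j b.
have n_ge0 := nfl_ge0 r_gt0 r_lt1 (b:=b); have n'_ge0 := nfl_ge0 r'_gt0 r'_lt1 (b:=b).
have -> : (nfl nrm r w b - nfl nrm r' w b)%Z =
    (Z.of_nat (Z.to_nat (nfl nrm r w b)) + - Z.of_nat (Z.to_nat (nfl nrm r' w b)))%Z.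
  by rewrite !Znat.Z2Nat.id; lia.
rewrite powerRZ_add; last by have := bt_q_gt0; lra.
rewrite powerRZ_neg' -!pow_powerRZ.
by apply: Rmult_le_compat_l y_le; apply: pow_le; have := bt_q_gt0; lra.
Qed.

Definition nfl_gap b := (nfl nrm r w b - nfl nrm r' w b)%Z.

(* With z = b ln r' / ln q we have n(r, w, b) = floor (p z) and n(r', w, b) = floor z. *)
Let z b := (INR b * (ln r' / ln q))%R.

Let ln_ratio_gt0 : Rlt 0 (ln r' / ln q).
Proof.
have := Rinv_lt_0_compat _ ln_q_lt0.
have : Rlt (ln r') 0 by rewrite -ln_1; apply: ln_increasing; [exact: r'_gt0 | exact: r'_lt1].
rewrite /Rdiv; nra.
Qed.

Let z_ge0 b : Rle 0 (z b).
Proof. by apply: Rmult_le_pos; [exact: pos_INR | lra]. Qed.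

Lemma nfl_gapE b : nfl_gap b = (Int_part (INR p * z b) - Int_part (z b))%Z.
Proof.
rewrite /nfl_gap /nfl /z; congr (Int_part _ - Int_part _)%Z; last first.
  by rewrite /Rdiv Rmult_assoc.
rewrite ln_r'E; field.
by split; [apply: not_0_INR; lia | apply: Rlt_not_eq; exact: ln_q_lt0].
Qed.

Lemma nfl_gap_ge0 b : (0 <= nfl_gap b)%Z.
Proof.
rewrite nfl_gapE; have := Int_part_le_mul_sub p_ge2 (z_ge0 b).
have := Int_part_ge0 (z_ge0 b); lia.
Qed.

Lemma nfl_gap_mono b b' : (b <= b')%nat -> (nfl_gap b <= nfl_gap b')%Z.
Proof.
move=> bb'; rewrite !nfl_gapE; apply: Int_part_mul_sub_mono => //; first lia.
by apply: Rmult_le_compat_r; [lra | exact/le_INR/leP].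
Qed.

Lemma nfl_gap_unbounded K : exists b, (Z.of_nat K <= nfl_gap b)%Z.
Proof.
have [b Hb] := INR_archimed (ln r' / ln q) (INR K + 1) ln_ratio_gt0.
exists b; rewrite nfl_gapE.
apply: Z.le_trans (Int_part_le_mul_sub p_ge2 (z_ge0 b)).
have [_ Hz] := Int_part_bounds (z b).
by apply: Z_le_of_IZR_lt_add1; rewrite -INR_IZR_INZ /z in Hz *; lra.
Qed.

Hypothesis t_gt0 : (1 <= t)%nat.

Let row_exp k := Z.to_nat (nfl_gap (k %/ t)).

Lemma mat_row_bound k l : Rle (nrm (mat nrm t_gt0 r w f k l)) (q ^ row_exp k).
Proof.
apply: Rle_trans (ecoord_f_ebasis_le _ _ _ _) _.
by rewrite pow_powerRZ Znat.Z2Nat.id; [exact: Rle_refl | exact: nfl_gap_ge0].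
Qed.

Lemma lamE n : lam nrm t r r' w n = Z.of_nat (\sum_(k < n) row_exp k)%nat.
Proof.
elim: n => [|n IH]; first by rewrite big_ord0.
rewrite big_ord_recr /= Znat.Nat2Z.inj_add -IH Znat.Z2Nat.id; last exact: nfl_gap_ge0.
by rewrite /nfl_gap; lia.
Qed.

Lemma fred_coef_bound n : exists c : A,
  seq_cv nrm (fun N => fred_partial (mat nrm t_gt0 r w f) N n) c /\
  Rle (nrm c) (powerRZ q (lam nrm t r r' w n)).
Proof.
have row_exp_mono k k' : (k <= k')%nat -> (row_exp k <= row_exp k')%nat.
  by move=> kk'; apply/leP; rewrite /row_exp; have := nfl_gap_mono (leq_div2r t kk'); lia.
have row_exp_unbounded K : exists N, (K <= row_exp N)%nat.
  have [b Hb] := nfl_gap_unbounded K.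
  by exists (b * t)%nat; rewrite /row_exp mulnK //; apply/leP; lia.
have q_gt0 := bt_q_gt0.
have [c [uc cb]] := fred_coef_limit (bt_nonneg BT) bt_nrm0 (bt_opp BT) (bt_ultra BT)
  (bt_submul BT) (bt_one BT) (Rlt_le _ _ q_gt0) (bt_complete BT) (bt_lt1 BT)
  row_exp_mono row_exp_unbounded mat_row_bound n.
by exists c; rewrite lamE -pow_powerRZ.
Qed.

End BanachTate.

Unset Implicit Arguments.

Theorem mainTheorem14
  (p : nat) (A : comUnitRingType) (nrm : A -> real) (w : A) :
  prime p -> odd p ->
  banach_tate nrm p w -> noetherian A ->
  (forall x : A, ~ (Rlt R1 (nrm x) /\ Rlt (nrm x) (Rinv (nrm w)))) ->
  forall (r : real) (t : nat) (ht : leq 1 t),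
  Rle (Rinv (INR p)) r -> Rlt r R1 ->
  let r' := Rpower r (Rinv (INR p)) in
  forall f : vec A t -> vec A t,
  (forall x, in_D nrm r x -> in_D nrm r' (f x)) ->
  (forall x y, in_D nrm r x -> in_D nrm r y -> f (vadd x y) = vadd (f x) (f y)) ->
  (forall (c : A) x, in_D nrm r x -> f (vscale c x) = vscale c (f x)) ->
  (forall x c, in_D nrm r x -> norm_le nrm r x c -> norm_le nrm r' (f x) c) ->
  let U := f in
  (forall (i : 'I_t) (a : nat) (j : 'I_t) (b : nat),
      Rle (nrm (ecoord nrm r w (U (ebasis nrm r w i a)) j b))
          (powerRZ (nrm w) (nfl nrm r w b - nfl nrm r' w b)%Z)) /\
  (forall n : nat, exists c : A,
      seq_cv nrm (fun N => fred_partial (mat nrm ht r w U) N n) c /\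
      Rle (nrm c) (powerRZ (nrm w) (lam nrm t r r' w n))).
Proof.
move=> p_prime _ BT _ gap r t t_gt0 r_ge r_lt1 r' f _ _ _ f_norm U.
have p_ge2 : (2 <= p)%coq_nat by apply/leP; exact: prime_gt1.
split.
  move=> i a j b; exact: (ecoord_f_ebasis_le BT gap p_ge2 r_ge r_lt1 f_norm i a j b).
move=> n; exact: (fred_coef_bound BT gap p_ge2 r_ge r_lt1 f_norm t_gt0 n).
Qed.
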